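(* Let $p:\mathbb R^{n\times k}\to\mathbb R$ be a polynomial invariant under all permutations of the last $n-1$ rows of $\mathbf X=(\mathbf x_1,\dots,\mathbf x_n)^T$. Then $$p(\mathbf X)=\sum_{\alpha\in\mathbb N^k,\ |\alpha|\le n}\mathbf x_1^\alpha\,q_\alpha(\mathbf X),$$ where each $q_\alpha:\mathbb R^{n\times k}\to\mathbb R$ is a polynomial invariant under all permutations of the rows of $\mathbf X$ (i.e. $S_n$-invariant).
   Context: For $\mathbf x\in\mathbb R^k$ and $\alpha\in\mathbb N^k$, $\mathbf x^\alpha=x_1^{\alpha_1}\cdots x_k^{\alpha_k}$ and $|\alpha|=\sum_i\alpha_i$. $S_n$ acts on $\mathbf X\in\mathbb R^{n\times k}$ by permuting rows. *)

From HB Require Import structures.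
From mathcomp Require Import all_boot all_order all_algebra all_fingroup.
From mathcomp Require Import mpoly.
Set Implicit Arguments. Unset Strict Implicit. Unset Printing Implicit Defensive.
Import GRing.Theory.
Local Open Scope ring_scope.

(* A polynomial function on R^{n x k} is represented by a polynomial in the
   n*k variables x_{i,j}; the variable x_{i,j} (entry (i,j) of X, i.e.
   coordinate j of row x_i) has index [mxvec_index i j : 'I_(n*k)]. *)
Definition xvar (R : nzRingType) (n k : nat) (i : 'I_n) (j : 'I_k)
  : {mpoly R[n * k]} := 'X_(mxvec_index i j).

Definition var_pos (n k : nat) (v : 'I_(n * k)) : 'I_n * 'I_k :=
  enum_val (cast_ord (esym (@mxvec_cast n k)) v).

(* The action of a row permutation s : 'S_n on polynomials:
   (s . p)(X) = p(X with row i replaced by row s i), i.e. substitute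
   x_{i,j} := x_{s i, j}. *)
Definition row_act (R : nzRingType) (n k : nat) (s : 'S_n)
  (p : {mpoly R[n * k]}) : {mpoly R[n * k]} :=
  p \mPo [tuple xvar R (s (var_pos v).1) (var_pos v).2 | v < n * k].

Definition row_invariant (R : nzRingType) (n k : nat) (s : 'S_n)
  (p : {mpoly R[n * k]}) : Prop := row_act s p = p.

Definition row_monom (R : nzRingType) (n k : nat) (i1 : 'I_n)
  (a : 'X_{1..k}) : {mpoly R[n * k]} :=
  \prod_(j < k) xvar R i1 j ^+ a j.

From HB Require Import structures.
From mathcomp Require Import all_boot all_order all_algebra all_fingroup.
From mathcomp Require Import mpoly.
Import GRing.Theory.
Set Implicit Arguments. Unset Strict Implicit. Unset Printing Implicit Defensive.
Local Open Scope ring_scope.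

(* Let M be the set of polynomials sum_(|a| <= n) x_1^a q_a with S_n-invariant
   q_a. It is a vector space containing the invariants and stable under
   multiplication by powers of x_1, so an H-invariant p (H the stabilizer of
   row 1) lies in M as soon as every H-average of a monomial does.
   Powers of x_1 of degree > n are brought back into range by the identity
     sum_(s in S_n) prod_t (x_(1,j_t) - x_(s t,j_t)) = 0,
   where the factor t = s^-1 1 vanishes: expanding the products writes
   n! x_(1,j_1)...x_(1,j_n) through lower powers of x_1 times S_n-averages.
   The H-average of a monomial splits off the power of x_1 it contains; for a
   monomial free of row 1, splitting its S_n-average along the cosets of H
   yields its H-average once for each zero row, plus powers of x_1 times
   H-averages of monomials with fewer nonzero rows. *)

Lemma mdeg_sum_mnm1 (k : nat) I (r : seq I) (Q : pred I) (js : I -> 'I_k) :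
  mdeg (\sum_(t <- r | Q t) U_(js t))%MM = (\sum_(t <- r | Q t) 1)%N.
Proof. by rewrite mdeg_sum; apply: eq_bigr => t _; rewrite mdeg1. Qed.

Lemma mnm_split_mnm1 (k m : nat) (g : 'X_{1..k}) : (m <= mdeg g)%N ->
  exists (js : 'I_m -> 'I_k) (d : 'X_{1..k}),
    g = (d + \sum_(t < m) U_(js t))%MM.
Proof.
elim: m => [|m IH] le_mg.
  exists (fun t : 'I_0 => False_rect _ (notF (ltn_ord t))), g.
  by rewrite big_ord0 addm0.
have [js [d def_g]] := IH (ltnW le_mg).
have [j d_j | d0] := pickP (fun j => d j != 0%N); last first.
  have d_eq0 : d = 0%MM by apply/mnmP => j; rewrite mnm0E; apply/eqP/negbFE/d0.
  move: le_mg; rewrite def_g d_eq0 add0m mdeg_sum_mnm1 sum1_card card_ord.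
  by rewrite ltnn.
exists (fun t => if unlift ord0 t is Some t' then js t' else j), (d - U_(j))%MM.
rewrite big_ord_recl /= unlift_none def_g addmA; congr (_ + _)%MM.
  apply/mnmP => i; rewrite !mnmDE mnmBE mnm1E.
  case: eqP => [<- | _]; last by rewrite subn0 addn0.
  by rewrite addn1 subn1 prednK // lt0n.
by apply: eq_bigr => t _; rewrite liftK.
Qed.

Section RowAction.
Variables (R : comNzRingType) (n k : nat).
Local Notation P := {mpoly R[n * k]}.

Lemma var_pos_mxvec_index (i : 'I_n) (j : 'I_k) :
  var_pos (mxvec_index i j) = (i, j).
Proof. by rewrite /var_pos /mxvec_index cast_ordK enum_rankK. Qed.

Lemma mxvec_index_var_pos (v : 'I_(n * k)) :
  mxvec_index (var_pos v).1 (var_pos v).2 = v.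
Proof. by case/mxvec_indexP: v => i j; rewrite var_pos_mxvec_index. Qed.

HB.instance Definition _ (s : 'S_n) :=
  GRing.LRMorphism.copy (@row_act R n k s)
    (comp_mpoly [tuple xvar R (s (var_pos v).1) (var_pos v).2 | v < n * k]).

Lemma row_act_X (s : 'S_n) (v : 'I_(n * k)) :
  row_act s 'X_v = xvar R (s (var_pos v).1) (var_pos v).2.
Proof. by rewrite /row_act comp_mpolyXU -tnth_nth tnth_mktuple. Qed.

Lemma row_act_xvar (s : 'S_n) (i : 'I_n) (j : 'I_k) :
  row_act s (xvar R i j) = xvar R (s i) j.
Proof. by rewrite row_act_X var_pos_mxvec_index. Qed.

Lemma row_act_comp (s t : 'S_n) (p : P) :
  row_act t (row_act s p) = row_act (s * t)%g p.
Proof.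
rewrite [p]mpolyE (raddf_sum (row_act s)) !raddf_sum; apply: eq_bigr => m _ /=.
rewrite !linearZ mpolyXE_id !rmorph_prod; congr (_ *: _); apply: eq_bigr => v _.
by rewrite !rmorphXn /= !row_act_X var_pos_mxvec_index permM.
Qed.

Lemma row_monom0 (i : 'I_n) : row_monom R i 0%MM = 1 :> P.
Proof. by rewrite /row_monom big1 // => j _; rewrite mnm0E expr0. Qed.

Lemma row_monomD (i : 'I_n) (a b : 'X_{1..k}) :
  row_monom R i (a + b)%MM = row_monom R i a * row_monom R i b :> P.
Proof.
by rewrite /row_monom -big_split; apply: eq_bigr => j _; rewrite mnmDE exprD.
Qed.

Lemma row_monom_sum_mnm1 (i : 'I_n) I (r : seq I) (Q : pred I)
    (js : I -> 'I_k) :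
  row_monom R i (\sum_(t <- r | Q t) U_(js t))%MM
  = \prod_(t <- r | Q t) xvar R i (js t) :> P.
Proof.
rewrite (big_morph (row_monom R i) (row_monomD i) (row_monom0 i)).
apply: eq_bigr => t _; rewrite /row_monom (bigD1 (js t)) //= mnm1E eqxx expr1.
by rewrite big1 ?mulr1 // => j /negbTE; rewrite mnm1E eq_sym => ->.
Qed.

Lemma row_act_row_monom (s : 'S_n) (i : 'I_n) (a : 'X_{1..k}) :
  row_act s (row_monom R i a) = row_monom R (s i) a.
Proof.
by rewrite rmorph_prod; apply: eq_bigr => j _; rewrite rmorphXn /= row_act_xvar.
Qed.

Definition rows_monom (e : 'I_n -> 'X_{1..k}) : P :=
  \prod_i row_monom R i (e i).

Definition row_exps (m : 'X_{1..n * k}) (i : 'I_n) : 'X_{1..k} :=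
  [multinom m (mxvec_index i j) | j < k].

Lemma mpolyX_rows_monom m : 'X_[m] = rows_monom (row_exps m).
Proof.
rewrite mpolyXE_id /rows_monom /row_monom.
under [RHS]eq_bigr do under eq_bigr do rewrite mnmE.
rewrite pair_big /=.
rewrite (reindex (fun ij : 'I_n * 'I_k => mxvec_index ij.1 ij.2)) //=.
exists (@var_pos n k) => [[i j] _ | v _]; first by rewrite var_pos_mxvec_index.
exact: mxvec_index_var_pos.
Qed.

Lemma row_act_rows_monom (s : 'S_n) e :
  row_act s (rows_monom e) = rows_monom (e \o (s^-1)%g).
Proof.
rewrite rmorph_prod [RHS](reindex_inj (@perm_inj _ s)) /=.
by apply: eq_bigr => i _; rewrite row_act_row_monom permK.
Qed.

Definition symmetrize (f : P) : P := \sum_(s : 'S_n) row_act s f.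

Definition sym_invariant (q : P) : Prop := forall s : 'S_n, row_invariant s q.

Lemma symmetrize_invariant f : sym_invariant (symmetrize f).
Proof.
move=> t; rewrite /row_invariant raddf_sum (reindex_inj (mulIg t^-1)%g) /=.
by apply: eq_bigr => s _; rewrite row_act_comp mulgKV.
Qed.

Variable i0 : 'I_n.

Lemma sum_perm_prod_xvar_sub (js : 'I_n -> 'I_k) :
  \sum_(s : 'S_n) \prod_t (xvar R i0 (js t) - xvar R (s t) (js t)) = 0 :> P.
Proof.
by apply: big1 => s _; rewrite (bigD1 ((s^-1)%g i0)) //= permKV subrr mul0r.
Qed.

Lemma prod_xvar_mulrn_card_perm (js : 'I_n -> 'I_k) :
  \prod_t xvar R i0 (js t) *+ #|'S_n| =
  - \sum_(J : {set 'I_n} | J != setT)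
      row_monom R i0 (\sum_(t in J) U_(js t))%MM
      * symmetrize (\prod_(t in ~: J) - xvar R t (js t)).
Proof.
apply/eqP; rewrite -subr_eq0 opprK; apply/eqP.
rewrite -[RHS](sum_perm_prod_xvar_sub js).
under [RHS]eq_bigr do rewrite bigA_distr.
rewrite exchange_big [RHS](bigD1 setT) //=; congr (_ + _).
  rewrite -sumr_const; apply: eq_bigr => s _.
  by apply: eq_bigr => t _; rewrite in_setT.
apply: eq_bigr => J _; rewrite mulr_sumr; apply: eq_bigr => s _.
rewrite big_if /= row_monom_sum_mnm1 rmorph_prod; congr (_ * _).
apply: eq_big => [t | t _]; first by rewrite in_setC.
by rewrite raddfN /= row_act_xvar.
Qed.

Definition stab_symmetrize (f : P) : P :=
  \sum_(h : 'S_n | h i0 == i0) row_act h f.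

Lemma stab_symmetrize_row_monom_mul (g : 'X_{1..k}) (f : P) :
  stab_symmetrize (row_monom R i0 g * f) = row_monom R i0 g * stab_symmetrize f.
Proof.
rewrite mulr_sumr; apply: eq_bigr => h /eqP h_i0.
by rewrite rmorphM /= row_act_row_monom h_i0.
Qed.

Lemma symmetrize_stab_cosets (f : P) :
  symmetrize f = \sum_i stab_symmetrize (row_act (tperm i0 i) f).
Proof.
rewrite /symmetrize (partition_big (fun s : 'S_n => (s^-1)%g i0) predT) //=.
apply: eq_bigr => i _; rewrite (reindex_inj (mulgI (tperm i0 i))) /=.
apply: eq_big => [h | h _]; last by rewrite row_act_comp.
rewrite invMg permM tpermV -[X in _ == X](tpermL i0 i) (inj_eq perm_inj).
by rewrite -(inj_eq (@perm_inj _ h)) permKV eq_sym.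
Qed.

Definition zero_row (i : 'I_n) (e : 'I_n -> 'X_{1..k}) (r : 'I_n) :
  'X_{1..k} :=
  if r == i then 0%MM else e r.

Definition nz_rows (e : 'I_n -> 'X_{1..k}) : {set 'I_n} :=
  [set i | e i != 0%MM].

Lemma nz_rows_zero_row i e : nz_rows (zero_row i e) = nz_rows e :\ i.
Proof.
by apply/setP => r; rewrite !inE /zero_row; case: (r == i); rewrite ?eqxx.
Qed.

Lemma rows_monom_zero_row i e :
  rows_monom e = row_monom R i (e i) * rows_monom (zero_row i e).
Proof.
rewrite /rows_monom (bigD1 i) //= [in RHS](bigD1 i) //= /zero_row eqxx.
by rewrite row_monom0 mul1r; congr (_ * _); apply: eq_bigr => r /negbTE ->.
Qed.

Lemma stab_symmetrize_tperm_rows_monom e i : e i0 = 0%MM ->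
  stab_symmetrize (row_act (tperm i0 i) (rows_monom e))
  = row_monom R i0 (e i) * stab_symmetrize (rows_monom (zero_row i e)).
Proof.
move=> e_i0; rewrite row_act_rows_monom tpermV.
rewrite (rows_monom_zero_row i0) /= tpermL.
rewrite stab_symmetrize_row_monom_mul; congr (_ * stab_symmetrize _).
apply: eq_bigr => r _; rewrite /zero_row /=.
case: (eqVneq r i0) => [->|r_i0]; first by rewrite e_i0; case: ifP.
case: (eqVneq r i) => [->|r_i]; first by rewrite tpermR e_i0.
by rewrite tpermD // eq_sym.
Qed.

Lemma stab_symmetrize_rows_monom_mulrn e : e i0 = 0%MM ->
  stab_symmetrize (rows_monom e) *+ #|[pred i | e i == 0%MM]|
  = symmetrize (rows_monom e)
    - \sum_(i | e i != 0%MM)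
        row_monom R i0 (e i) * stab_symmetrize (rows_monom (zero_row i e)).
Proof.
move=> e_i0; apply/eqP; rewrite eq_sym subr_eq; apply/eqP.
rewrite symmetrize_stab_cosets (bigID (fun i => e i == 0%MM)) /=.
congr (_ + _); last first.
  by apply: eq_bigr => i _; rewrite stab_symmetrize_tperm_rows_monom.
rewrite -sumr_const; apply: eq_big => [i | i /eqP e_i]; first by rewrite inE.
rewrite stab_symmetrize_tperm_rows_monom // e_i row_monom0 mul1r.
congr (stab_symmetrize _); apply: eq_bigr => r _.
by rewrite /zero_row; case: eqVneq => [->|]; rewrite ?e_i.
Qed.

Lemma stab_symmetrize_mpolyE (p : P) :
  stab_symmetrize p
  = \sum_(m <- msupp p) p@_m *: stab_symmetrize (rows_monom (row_exps m)).
Proof.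
under [RHS]eq_bigr do rewrite scaler_sumr.
rewrite exchange_big /=; apply: eq_bigr => h _.
rewrite {1}[p]mpolyE raddf_sum; apply: eq_bigr => m _.
by rewrite /= linearZ mpolyX_rows_monom.
Qed.

End RowAction.

Section RowExpansion.
Variables (R : fieldType) (n k : nat) (i0 : 'I_n).
Hypothesis charR0 : [pchar R] =i pred0.
Local Notation P := {mpoly R[n * k]}.

Definition has_row_expansion (p : P) : Prop :=
  exists q : 'X_{1..k < n.+1} -> P,
    (forall a, sym_invariant (q a)) /\
    p = \sum_(a : 'X_{1..k < n.+1}) row_monom R i0 a * q a.

Lemma scaleV_mulrn (m : nat) (x : P) : (0 < m)%N -> (m%:R)^-1 *: (x *+ m) = x.
Proof.
move=> m_gt0; rewrite -scaler_nat scalerA mulVf ?scale1r //.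
by move/(pcharf0P R): charR0 => ->; rewrite -lt0n.
Qed.

Lemma has_row_expansion0 : has_row_expansion 0.
Proof.
exists (fun _ => 0); split => [a s|]; first exact: raddf0.
by rewrite big1 // => a _; rewrite mulr0.
Qed.

Lemma has_row_expansionD p1 p2 :
  has_row_expansion p1 -> has_row_expansion p2 -> has_row_expansion (p1 + p2).
Proof.
move=> [q1 [q1_inv ->]] [q2 [q2_inv ->]]; exists (fun a => q1 a + q2 a); split.
  by move=> a s; rewrite /row_invariant raddfD /= q1_inv q2_inv.
by rewrite -big_split; apply: eq_bigr => a _; rewrite mulrDr.
Qed.

Lemma has_row_expansionZ c p :
  has_row_expansion p -> has_row_expansion (c *: p).
Proof.
move=> [q [q_inv ->]]; exists (fun a => c *: q a); split.
  by move=> a s; rewrite /row_invariant linearZ /= q_inv.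
by rewrite scaler_sumr; apply: eq_bigr => a _; rewrite scalerAr.
Qed.

Lemma has_row_expansion_sum I (r : seq I) (Q : pred I) (F : I -> P) :
  (forall i, Q i -> has_row_expansion (F i)) ->
  has_row_expansion (\sum_(i <- r | Q i) F i).
Proof.
move=> F_exp; apply: big_ind => //.
  exact: has_row_expansion0.
exact: has_row_expansionD.
Qed.

Lemma has_row_expansion_row_monom_mul_invariant (g : 'X_{1..k}) (r : P) :
  sym_invariant r -> has_row_expansion (row_monom R i0 g * r).
Proof.
have [N] := ubnP (mdeg g); elim: N => // N IH in g r *.
rewrite ltnS => le_gN r_inv.
have [small | big] := ltnP (mdeg g) n.+1.
  exists (fun a => if a == g :> 'X_{1..k} then r else 0); split.
    by move=> a s; case: ifP => _; [exact: r_inv | exact: raddf0].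
  rewrite (bigD1 (BMultinom small)) //= eqxx big1 ?addr0 // => a.
  by rewrite bmeqP /= => /negbTE ->; rewrite mulr0.
have [js [d def_g]] := mnm_split_mnm1 (ltnW big).
have card_perm_gt0 : (0 < #|'S_n|)%N by apply/card_gt0P; exists 1%g.
rewrite def_g row_monomD row_monom_sum_mnm1.
rewrite -[\prod_(t < n) _](scaleV_mulrn _ card_perm_gt0).
rewrite prod_xvar_mulrn_card_perm scalerN -scaleNr scaler_sumr.
rewrite !mulr_sumr mulr_suml.
apply: has_row_expansion_sum => J J_neqT.
rewrite -scalerAr -scalerAl; apply: has_row_expansionZ.
rewrite mulrA -row_monomD -mulrA; apply: IH.
  apply: leq_trans le_gN; rewrite def_g !mdegD !mdeg_sum_mnm1 !sum1_card.
  by rewrite ltn_add2l -cardsT proper_card ?properT.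
move=> s; rewrite /row_invariant rmorphM /= r_inv.
by rewrite (symmetrize_invariant _ s).
Qed.

Lemma has_row_expansion_invariant r : sym_invariant r -> has_row_expansion r.
Proof.
move=> /(has_row_expansion_row_monom_mul_invariant 0%MM).
by rewrite row_monom0 mul1r.
Qed.

Lemma has_row_expansion_row_monom_mul (g : 'X_{1..k}) p :
  has_row_expansion p -> has_row_expansion (row_monom R i0 g * p).
Proof.
move=> [q [q_inv ->]]; rewrite mulr_sumr; apply: has_row_expansion_sum => a _.
by rewrite mulrA -row_monomD; apply: has_row_expansion_row_monom_mul_invariant.
Qed.

Lemma has_row_expansion_stab_rows_monom (e : 'I_n -> 'X_{1..k}) :
  has_row_expansion (stab_symmetrize i0 (rows_monom R e)).
Proof.
have [N] := ubnP #|nz_rows e|; elim: N => // N IH in e *; rewrite ltnS => le_eN.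
rewrite (rows_monom_zero_row _ i0) stab_symmetrize_row_monom_mul.
apply: has_row_expansion_row_monom_mul.
set e0 := zero_row i0 e.
have e0_i0 : e0 i0 = 0%MM by rewrite /e0 /zero_row eqxx.
have card_zero_gt0 : (0 < #|[pred i | e0 i == 0%MM]|)%N.
  by apply/card_gt0P; exists i0; rewrite inE e0_i0.
rewrite -[stab_symmetrize _ _](scaleV_mulrn _ card_zero_gt0).
rewrite stab_symmetrize_rows_monom_mulrn //.
apply: has_row_expansionZ; apply: has_row_expansionD.
  exact/has_row_expansion_invariant/symmetrize_invariant.
rewrite -scaleN1r; apply: has_row_expansionZ.
apply: has_row_expansion_sum => i e0_i.
apply/has_row_expansion_row_monom_mul/IH; apply: leq_trans le_eN.
apply: (@leq_trans #|nz_rows e0|).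
  by rewrite nz_rows_zero_row [X in (_ < X)%N](cardsD1 i) inE e0_i.
by rewrite /e0 nz_rows_zero_row subset_leq_card // subD1set.
Qed.

Lemma has_row_expansion_stab_invariant p :
  (forall h : 'S_n, h i0 = i0 -> row_invariant h p) -> has_row_expansion p.
Proof.
move=> p_inv.
have card_stab_gt0 : (0 < #|[pred h : 'S_n | h i0 == i0]|)%N.
  by apply/card_gt0P; exists 1%g; rewrite inE perm1.
have stab_p : stab_symmetrize i0 p = p *+ #|[pred h : 'S_n | h i0 == i0]|.
  rewrite -sumr_const; apply: eq_big => [h | h /eqP h_i0]; first by rewrite inE.
  exact: p_inv.
rewrite -(scaleV_mulrn p card_stab_gt0) -stab_p stab_symmetrize_mpolyE.
apply: has_row_expansionZ; apply: has_row_expansion_sum => m _.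
exact/has_row_expansionZ/has_row_expansion_stab_rows_monom.
Qed.

End RowExpansion.

Theorem lemma2 (R : realFieldType) (n k : nat) (hn : (0 < n)%N)
  (p : {mpoly R[n * k]}) :
  (forall s : 'S_n, s (Ordinal hn) = Ordinal hn -> row_invariant s p) ->
  exists q : 'X_{1..k < n.+1} -> {mpoly R[n * k]},
    (forall a, forall s : 'S_n, row_invariant s (q a)) /\
    p = \sum_(a : 'X_{1..k < n.+1}) row_monom R (Ordinal hn) a * q a.
Proof. exact: (has_row_expansion_stab_invariant (@Num.Theory.pchar_num R)). Qed.
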